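(* ${\sf MBRev}(\mathcal D_{ERC}(H))=\Omega(\log\log H)$ as $H\to\infty$.
   Context: $\mathcal D_{ERC}(H)$ (equal revenue curve truncated at $H$) is the distribution on $[1,H]$ with $\Pr[v\ge t]=1/t$ for $t\in[1,H]$, i.e. density $q(v)=1/v^2$ on $[1,H)$ and an atom of mass $1/H$ at $H$. For a distribution with density $q$ on $[1,H]$ the mean-based revenue is ${\sf MBRev}=\sup_{x}\int_1^H q(v)\big(v\,x(v)-\sup_{1\le w<v}(v-w)x(w)\big)\,dv$ (plus the analogous contribution of any atom), where the supremum is over functions $x:[1,H]\to[0,1]$. Note ${\sf Mye}(\mathcal D_{ERC}(H))=1$. *)

From Stdlib Require Import Reals Lra ClassicalEpsilon.
Open Scope R_scope.

(* Supremum of a set of reals; 0 by convention when the set is empty or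
   unbounded above (only used on bounded sets, empty only at v = 1). *)
Definition Rsup (E : R -> Prop) : R :=
  match excluded_middle_informative (bound E /\ exists y, E y) with
  | left h => proj1_sig (completeness E (proj1 h) (proj2 h))
  | right _ => 0
  end.

Definition devgain (x : R -> R) (v : R) : R :=
  Rsup (fun r => exists w, 1 <= w < v /\ r = (v - w) * x w).

Definition mb_term (x : R -> R) (v : R) : R := v * x v - devgain x v.

(* density of D_ERC(H) on [1,H) *)
Definition q_erc (v : R) : R := 1 / (v ^ 2).

Definition admissible (H : R) (x : R -> R) : Prop :=
  forall v, 1 <= v <= H -> 0 <= x v <= 1.

(* r is the mean-based revenue of allocation x on D_ERC(H):
   integral of the density part over [1,H] plus the atom of mass 1/H at H. *)
Definition mb_rev_erc (H : R) (x : R -> R) (r : R) : Prop :=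
  exists pr : Riemann_integrable (fun v => q_erc v * mb_term x v) 1 H,
    r = RiemannInt pr + (1 / H) * mb_term x H.

Definition MBRev_ub (H M : R) : Prop :=
  forall x r, admissible H x -> mb_rev_erc H x r -> r <= M.

From Stdlib Require Import Reals Lra ClassicalEpsilon.
From Coquelicot Require Import Coquelicot.
Open Scope R_scope.

(* Take the allocation x(v) = ln v / ln H (capped at 1 beyond H).  By the
   tangent-line bound ln w <= ln(v / ln v) + w ln v / v - 1 and a completed
   square, the best deviation of type v >= e gains at most
   (v ln v - v (ln ln v + 1) / 2) / ln H, so type v pays at least
   v (ln ln v + 1) / (2 ln H).  Against the density 1/v^2 this integrates over
   [e, H] to exactly (ln ln H) / 2, while types in [1, e] and the atom at H
   pay a nonnegative amount. *)

Lemma Rsup_ub (E : R -> Prop) (y : R) : bound E -> E y -> y <= Rsup E.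
Proof.
  intros Eb Ey; unfold Rsup.
  destruct excluded_middle_informative as [h | h].
  - destruct (completeness E (proj1 h) (proj2 h)) as [s [s_ub s_lub]]; simpl; now apply s_ub.
  - exfalso; apply h; split; eauto.
Qed.

Lemma Rsup_le (E : R -> Prop) (B : R) :
  0 <= B -> (forall y, E y -> y <= B) -> Rsup E <= B.
Proof.
  intros B_ge0 B_ub; unfold Rsup.
  destruct excluded_middle_informative as [h | h]; [| easy].
  destruct (completeness E (proj1 h) (proj2 h)) as [s [s_ub s_lub]]; simpl; now apply s_lub.
Qed.

Lemma Rsup_ge0 (E : R -> Prop) :
  (forall y, E y -> exists z, E z /\ 0 <= z) -> 0 <= Rsup E.
Proof.
  intros E_nonneg; unfold Rsup.
  destruct excluded_middle_informative as [h | _]; [| lra].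
  destruct (completeness E (proj1 h) (proj2 h)) as [s [s_ub s_lub]]; simpl.
  destruct (proj2 h) as [y Ey], (E_nonneg y Ey) as [z [Ez z_ge0]].
  apply Rle_trans with z; [easy | now apply s_ub].
Qed.

Lemma continuous_of_1_lipschitz (f : R -> R) :
  (forall a b, Rabs (f b - f a) <= Rabs (b - a)) -> forall p, continuous f p.
Proof.
  intros f_lip p; apply continuity_pt_filterlim, continuity_pt_locally.
  intros eps; exists eps; intros y Hy.
  apply Rle_lt_trans with (Rabs (y - p)); [apply f_lip | exact Hy].
Qed.

Lemma ln_le_sub1 (y : R) : 0 < y -> ln y <= y - 1.
Proof.
  intros y_pos; rewrite <- (ln_exp (y - 1)).
  apply ln_le; [easy |]; pose proof (exp_ineq1_le (y - 1)); lra.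
Qed.

Lemma ln_ge1 (v : R) : exp 1 <= v -> 1 <= ln v.
Proof. intros Hv; rewrite <- (ln_exp 1); apply ln_le; [apply exp_pos | easy]. Qed.

Lemma sub_mul_ln_le (v w : R) : exp 1 <= v -> 0 < w <= v ->
  (v - w) * ln w <= v * ln v - v * (ln (ln v) + 1) / 2.
Proof.
  intros Hv Hw; pose proof (exp_pos 1); pose proof (ln_ge1 v Hv) as u_ge1.
  set (u := ln v) in *.
  assert (l_ge0 : 0 <= ln u) by (rewrite <- ln_1; apply ln_le; lra).
  assert (l_le : ln u <= u - 1) by (apply ln_le_sub1; lra).
  set (l := ln u) in *.
  (* tangent line of ln at v / ln v, roughly where (v - w) ln w peaks *)
  assert (tangent : ln w <= u - l - 1 + w * u / v).
  { assert (a_pos : 0 < v / u) by (apply Rdiv_lt_0_compat; lra).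
    pose proof (ln_le_sub1 (w / (v / u)) ltac:(apply Rdiv_lt_0_compat; lra)) as Hl.
    rewrite ln_div, ln_div in Hl by lra; fold u l in Hl.
    replace (w / (v / u)) with (w * u / v) in Hl by (field; lra); lra. }
  apply Rle_trans with ((v - w) * (u - l - 1 + w * u / v));
    [apply Rmult_le_compat_l; lra |].
  apply Rmult_le_reg_l with (v * u); [nra |].
  (* v u (RHS - LHS) = (u w - (l + 1) v / 2)^2 + v^2 (l + 1) (2 u - l - 1) / 4 *)
  replace (v * u * ((v - w) * (u - l - 1 + w * u / v)))
    with (v * u * (v * u - v * (l + 1) / 2)
          - (u * w - (l + 1) * v / 2) ^ 2 - v ^ 2 * (l + 1) * (2 * u - l - 1) / 4)
    by (field; lra).
  assert (0 <= v ^ 2 * (l + 1) * (2 * u - l - 1)).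
  { apply Rmult_le_pos; [apply Rmult_le_pos; nra | lra]. }
  pose proof (pow2_ge_0 (u * w - (l + 1) * v / 2)); lra.
Qed.

Section Devgain.

Variable x : R -> R.
Hypothesis x_unit : forall w, 1 <= w -> 0 <= x w <= 1.

Lemma devgain_ub (v w : R) : 1 <= w < v -> (v - w) * x w <= devgain x v.
Proof.
  intros Hw; apply Rsup_ub; [| now exists w].
  exists (Rabs v + 1); intros r [w' [Hw' ->]].
  pose proof (x_unit w' (proj1 Hw')); pose proof (Rle_abs v).
  assert ((v - w') * x w' <= v - w') by (rewrite <- (Rmult_1_r (v - w')) at 2;
    apply Rmult_le_compat_l; lra); lra.
Qed.

Lemma devgain_le (v B : R) :
  0 <= B -> (forall w, 1 <= w < v -> (v - w) * x w <= B) -> devgain x v <= B.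
Proof. intros B_ge0 B_ub; apply Rsup_le; [easy |]; intros r [w [Hw ->]]; auto. Qed.

Lemma devgain_ge0 (v : R) : 0 <= devgain x v.
Proof.
  apply Rsup_ge0; intros r [w [Hw _]].
  exists ((v - 1) * x 1); split; [exists 1; split; [lra | easy] |].
  pose proof (x_unit 1 (Rle_refl 1)); apply Rmult_le_pos; lra.
Qed.

Lemma devgain_le_devgain (v v' : R) : v <= v' -> devgain x v <= devgain x v'.
Proof.
  intros Hv; apply devgain_le; [apply devgain_ge0 |]; intros w Hw.
  pose proof (x_unit w (proj1 Hw)).
  apply Rle_trans with ((v' - w) * x w); [apply Rmult_le_compat_r; lra |].
  apply devgain_ub; lra.
Qed.

Lemma devgain_le_add (v v' : R) : v <= v' -> devgain x v' <= devgain x v + (v' - v).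
Proof.
  intros Hv; apply devgain_le; [pose proof (devgain_ge0 v); lra |]; intros w Hw.
  pose proof (x_unit w (proj1 Hw)); pose proof (devgain_ge0 v).
  destruct (Rlt_dec w v) as [wv | wv].
  - pose proof (devgain_ub v w (conj (proj1 Hw) wv)).
    assert ((v' - v) * x w <= v' - v) by (rewrite <- (Rmult_1_r (v' - v)) at 2;
      apply Rmult_le_compat_l; lra); nra.
  - assert ((v' - w) * x w <= v' - w) by (rewrite <- (Rmult_1_r (v' - w)) at 2;
      apply Rmult_le_compat_l; lra); lra.
Qed.

Lemma continuous_devgain (p : R) : continuous (devgain x) p.
Proof.
  apply continuous_of_1_lipschitz; intros a b.
  destruct (Rle_dec a b) as [ab | ab].
  - pose proof (devgain_le_devgain a b ab); pose proof (devgain_le_add a b ab).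
    rewrite !Rabs_right; lra.
  - pose proof (devgain_le_devgain b a ltac:(lra)); pose proof (devgain_le_add b a ltac:(lra)).
    rewrite !Rabs_left1; lra.
Qed.

End Devgain.

Lemma is_RInt_lnln_density (c a b : R) : 0 < c -> 1 < a <= b ->
  is_RInt (fun v => (ln (ln v) + 1) / (c * v)) a b
    ((ln b * ln (ln b) - ln a * ln (ln a)) / c).
Proof.
  intros c_pos Hab.
  replace ((ln b * ln (ln b) - ln a * ln (ln a)) / c)
    with (minus (ln b * ln (ln b) / c) (ln a * ln (ln a) / c))
    by (unfold minus, plus, opp; simpl; field; lra).
  apply (is_RInt_derive (fun v => ln v * ln (ln v) / c));
    rewrite Rmin_left, Rmax_right by lra;
    intros v Hv; assert (0 < ln v) by (rewrite <- ln_1; apply ln_increasing; lra).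
  - auto_derive; [repeat split; lra | field; lra].
  - apply (@ex_derive_continuous R_AbsRing R_NormedModule); auto_derive; repeat split; nra.
Qed.

Section LogAllocation.

Variable H : R.
Hypothesis H_ge_e : exp 1 <= H.

Definition log_alloc (w : R) : R := ln (Rmin w H) / ln H.

Let lnH_ge1 : 1 <= ln H := ln_ge1 H H_ge_e.
Let H_gt1 : 1 < H.
Proof. pose proof (exp_ineq1 1 ltac:(lra)); lra. Qed.

Lemma log_alloc_le (w : R) : w <= H -> log_alloc w = ln w / ln H.
Proof. intros Hw; unfold log_alloc; now rewrite Rmin_left. Qed.

Lemma log_alloc_unit (w : R) : 1 <= w -> 0 <= log_alloc w <= 1.
Proof.
  intros Hw; unfold log_alloc.
  assert (1 <= Rmin w H <= H) by (unfold Rmin; destruct Rle_dec; lra).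
  assert (0 <= ln (Rmin w H) <= ln H) by (split; [rewrite <- ln_1 |]; apply ln_le; lra).
  split; [apply Rdiv_le_0_compat; lra |].
  apply Rmult_le_reg_r with (ln H); [lra |]; field_simplify; lra.
Qed.

Lemma continuous_log_alloc (p : R) : 1 <= p -> continuous log_alloc p.
Proof.
  intros Hp; unfold log_alloc, Rdiv.
  apply (@continuous_mult R_UniformSpace R_AbsRing (fun w => ln (Rmin w H)) (fun _ => / ln H));
    [| apply continuous_const].
  apply continuous_comp.
  - apply continuous_of_1_lipschitz; intros a b.
    unfold Rmin; destruct Rle_dec, Rle_dec; split_Rabs; lra.
  - apply continuous_ln; unfold Rmin; destruct Rle_dec; lra.
Qed.

Lemma mb_term_log_alloc_ge0 (v : R) : 1 <= v <= H -> 0 <= mb_term log_alloc v.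
Proof.
  intros Hv; unfold mb_term.
  assert (0 <= ln v) by (rewrite <- ln_1; apply ln_le; lra).
  enough (devgain log_alloc v <= v * log_alloc v) by lra.
  rewrite log_alloc_le by lra.
  apply devgain_le; [apply Rmult_le_pos, Rdiv_le_0_compat; lra |].
  intros w Hw; rewrite log_alloc_le by lra; unfold Rdiv; rewrite <- !Rmult_assoc.
  apply Rmult_le_compat_r; [left; apply Rinv_0_lt_compat; lra |].
  assert (0 <= ln w <= ln v) by (split; [rewrite <- ln_1 |]; apply ln_le; lra); nra.
Qed.

Lemma mb_term_log_alloc_ge (v : R) : exp 1 <= v <= H ->
  v * (ln (ln v) + 1) / (2 * ln H) <= mb_term log_alloc v.
Proof.
  intros Hv; pose proof (exp_pos 1); pose proof (ln_ge1 v (proj1 Hv)).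
  assert (0 <= ln (ln v)) by (rewrite <- ln_1; apply ln_le; lra).
  assert (dev : devgain log_alloc v <= (v * ln v - v * (ln (ln v) + 1) / 2) / ln H).
  { apply devgain_le.
    - apply Rdiv_le_0_compat; [|lra].
      pose proof (sub_mul_ln_le v v (proj1 Hv) ltac:(lra)); rewrite Rminus_diag in *; lra.
    - intros w Hw; rewrite log_alloc_le by lra; unfold Rdiv; rewrite <- Rmult_assoc.
      apply Rmult_le_compat_r; [left; apply Rinv_0_lt_compat; lra |].
      apply sub_mul_ln_le; lra. }
  unfold mb_term; rewrite log_alloc_le by lra.
  apply Rle_trans with (v * (ln v / ln H) - (v * ln v - v * (ln (ln v) + 1) / 2) / ln H);
    [right; field; lra | lra].
Qed.

Lemma continuous_mb_integrand (p : R) :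
  1 <= p -> continuous (fun v => q_erc v * mb_term log_alloc v) p.
Proof.
  intros Hp; apply (@continuous_mult R_UniformSpace R_AbsRing q_erc (mb_term log_alloc)).
  - apply (@ex_derive_continuous R_AbsRing R_NormedModule); unfold q_erc; auto_derive; nra.
  - apply (@continuous_minus R_UniformSpace R_AbsRing R_NormedModule
             (fun v => v * log_alloc v) (devgain log_alloc));
      [| apply continuous_devgain, log_alloc_unit].
    apply (@continuous_mult R_UniformSpace R_AbsRing (fun v => v) log_alloc);
      [apply continuous_id | now apply continuous_log_alloc].
Qed.

Lemma ex_RInt_mb_integrand (a b : R) : 1 <= a <= b -> b <= H ->
  ex_RInt (fun v => q_erc v * mb_term log_alloc v) a b.
Proof.
  intros Ha Hb; apply (@ex_RInt_continuous R_CompleteNormedModule).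
  rewrite Rmin_left, Rmax_right by lra; intros v Hv; apply continuous_mb_integrand; lra.
Qed.

Lemma RInt_mb_integrand_ge :
  ln (ln H) / 2 <= RInt (fun v => q_erc v * mb_term log_alloc v) 1 H.
Proof.
  pose proof (exp_pos 1); pose proof (exp_ineq1 1 ltac:(lra)).
  set (F := fun v => q_erc v * mb_term log_alloc v).
  assert (low : 0 <= RInt F 1 (exp 1)).
  { apply RInt_ge_0; [lra | apply ex_RInt_mb_integrand; lra |]; intros v Hv.
    apply Rmult_le_pos; [apply Rdiv_le_0_compat, pow_lt; lra |].
    apply mb_term_log_alloc_ge0; lra. }
  assert (high : ln (ln H) / 2 <= RInt F (exp 1) H).
  { pose proof (is_RInt_lnln_density (2 * ln H) (exp 1) H ltac:(lra) ltac:(lra)) as Hint.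
    replace (ln (ln H) / 2)
      with ((ln H * ln (ln H) - ln (exp 1) * ln (ln (exp 1))) / (2 * ln H))
      by (rewrite ln_exp, ln_1; field; lra).
    rewrite <- (is_RInt_unique _ _ _ _ Hint).
    apply RInt_le; [lra | eexists; exact Hint | apply ex_RInt_mb_integrand; lra |].
    intros v Hv; unfold F, q_erc.
    apply Rle_trans with (1 / v ^ 2 * (v * (ln (ln v) + 1) / (2 * ln H))).
    - right; field; split; lra.
    - apply Rmult_le_compat_l; [apply Rdiv_le_0_compat, pow_lt; lra |].
      apply mb_term_log_alloc_ge; lra. }
  rewrite <- (RInt_Chasles F 1 (exp 1) H) by (apply ex_RInt_mb_integrand; lra).
  unfold plus; simpl; lra.
Qed.

End LogAllocation.

Lemma mb_rev_erc_RInt (H : R) (x : R -> R) :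
  ex_RInt (fun v => q_erc v * mb_term x v) 1 H ->
  mb_rev_erc H x (RInt (fun v => q_erc v * mb_term x v) 1 H + 1 / H * mb_term x H).
Proof.
  intros ex; exists (ex_RInt_Reals_0 _ _ _ ex).
  now rewrite (RInt_Reals _ _ _ (ex_RInt_Reals_0 _ _ _ ex)).
Qed.

Theorem theoremC6 :
  exists c H0 : R, 0 < c /\
    forall H : R, H0 <= H ->
      forall M : R, MBRev_ub H M -> c * ln (ln H) <= M.
Proof.
  exists (1 / 2), (exp 1); split; [lra |]; intros H HH M HM.
  pose proof (exp_pos 1); pose proof (exp_ineq1 1 ltac:(lra)).
  apply Rle_trans with
    (RInt (fun v => q_erc v * mb_term (log_alloc H) v) 1 H + 1 / H * mb_term (log_alloc H) H).
  - pose proof (RInt_mb_integrand_ge H HH).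
    assert (0 <= 1 / H * mb_term (log_alloc H) H).
    { apply Rmult_le_pos; [apply Rdiv_le_0_compat; lra | apply mb_term_log_alloc_ge0; lra]. }
    lra.
  - apply (HM (log_alloc H)); [intros v Hv; apply log_alloc_unit; lra |].
    apply mb_rev_erc_RInt, ex_RInt_mb_integrand; lra.
Qed.
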